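(* Let $F$ be a compact metric space, $Y$ a normed space, and $S\colon F\to Y$ a continuous mapping. Then for every $n\in\mathbb{N}$, \[ \delta_n(S)\le 2\, e_n^{\mathrm{cont\text{-}non}}(S). \]
   Context: $e_n^{\mathrm{cont\text{-}non}}(S):=\inf\{\sup_{f\in F}\|S(f)-\Phi(N(f))\|_Y : N\colon F\to\mathbb{R}^n\text{ continuous},\ \Phi\colon\mathbb{R}^n\to Y\text{ arbitrary}\}$. The manifold widths are $\delta_n(S):=\inf\{\sup_{f\in F}\|S(f)-\Phi(N(f))\|_Y : N\colon F\to\mathbb{R}^n \text{ continuous},\ \Phi\colon\mathbb{R}^n\to Y\text{ continuous}\}$. *)

From HB Require Import structures.
From mathcomp Require Import all_boot all_order all_algebra.
From mathcomp Require Import all_classical all_reals all_analysis.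
Set Implicit Arguments. Unset Strict Implicit. Unset Printing Implicit Defensive.
Import Order.TTheory GRing.Theory Num.Theory.
Import numFieldNormedType.Exports.
Local Open Scope classical_set_scope.
Local Open Scope ring_scope.

Definition wc_err (R : realType) (F : pseudoMetricType R) (Y : normedModType R)
  (n : nat) (S : F -> Y) (N : F -> 'rV[R]_n) (Phi : 'rV[R]_n -> Y) : \bar R :=
  ereal_sup [set (`|S f - Phi (N f)|)%:E | f in [set: F]].

Definition e_cont_non (R : realType) (F : pseudoMetricType R) (Y : normedModType R)
  (S : F -> Y) (n : nat) : \bar R :=
  ereal_inf [set e | exists (N : F -> 'rV[R]_n) (Phi : 'rV[R]_n -> Y),
    continuous N /\ e = wc_err S N Phi].

Definition manifold_width (R : realType) (F : pseudoMetricType R) (Y : normedModType R)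
  (S : F -> Y) (n : nat) : \bar R :=
  ereal_inf [set e | exists (N : F -> 'rV[R]_n) (Phi : 'rV[R]_n -> Y),
    continuous N /\ continuous Phi /\ e = wc_err S N Phi].

From HB Require Import structures.
From mathcomp Require Import all_boot all_order all_algebra.
From mathcomp Require Import all_classical all_reals all_analysis.
From mathcomp Require Import finmap lra.
Import Order.TTheory GRing.Theory Num.Theory.
Import numFieldNormedType.Exports.
Local Open Scope classical_set_scope.
Local Open Scope ring_scope.

(* Let N be a continuous encoder and Phi any decoder with worst-case error e.
   Two points with the same code are both within e of the same value, so S
   oscillates by at most 2e on the fibers of N.  Compactness of F x F makes
   this uniform: codes closer than some del give values of S within 2e + eps.
   A finite partition of unity subordinate to del-balls around finitely many
   codes N x then glues the values S x into a continuous decoder with error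
   at most 2e + eps. *)

Lemma norm_sub_weighted_avg {R : realType} {Y : normedModType R} (I : Type)
    (s : seq I) (w : I -> R) (a : I -> Y) (v : Y) (r : R) :
  (forall i, 0 <= w i) -> (forall i, 0 < w i -> `|v - a i| <= r) ->
  0 < \sum_(i <- s) w i ->
  `|v - (\sum_(i <- s) w i)^-1 *: \sum_(i <- s) w i *: a i| <= r.
Proof.
move=> w_ge0 near_a; set W := \sum_(i <- s) w i => W_gt0.
have -> : v - W^-1 *: \sum_(i <- s) w i *: a i
          = W^-1 *: \sum_(i <- s) w i *: (v - a i).
  rewrite -[in LHS](scale1r v) -(mulVf (lt0r_neq0 W_gt0)) -scalerA -scalerBr.
  congr (_ *: _); rewrite scaler_suml -sumrB.
  by apply: eq_bigr => i _; rewrite scalerBr.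
rewrite normrZ ger0_norm ?invr_ge0 ?(ltW W_gt0) // (ler_pdivrMl _ _ W_gt0).
rewrite (le_trans (ler_norm_sum _ _ _)) // /W mulr_suml ler_sum // => i _.
rewrite normrZ ger0_norm //.
have := w_ge0 i; rewrite le_eqVlt => /predU1P[<-|wi_gt0]; first by rewrite !mul0r.
by rewrite ler_wpM2l // near_a.
Qed.

Lemma compact_finite_net {R : realType} {T : topologicalType} {V : normedModType R}
    (N : T -> V) (r : R) :
  compact [set: T] -> continuous N -> 0 < r ->
  exists A : {fset T}, forall x, exists2 y, y \in A & `|N y - N x| < r.
Proof.
move=> cT cN r_gt0.
have := continuous_compact (continuous_subspaceT cN) cT; rewrite compact_cover.
move=> /(_ T [set: T] (fun y => ball (N y) r)) [].
- by move=> y _; exact: ball_open.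
- by move=> _ [x _ <-]; exists x => //; exact: ballxx.
move=> A _ covA; exists A => x.
have [y Ay] := covA (N x) (imageT N x).
by rewrite -ball_normE /=; exists y.
Qed.

Lemma continuous_comp_fst {T U Z : topologicalType} {g : T -> Z} :
  continuous g -> continuous (fun p : T * U => g p.1).
Proof.
by move=> cg p; apply: (@cvg_comp _ _ _ fst g _ (nbhs p.1)); [exact: cvg_fst|exact: cg].
Qed.

Lemma continuous_comp_snd {T U Z : topologicalType} {g : U -> Z} :
  continuous g -> continuous (fun p : T * U => g p.2).
Proof.
by move=> cg p; apply: (@cvg_comp _ _ _ snd g _ (nbhs p.2)); [exact: cvg_snd|exact: cg].
Qed.

Section fiber_oscillation.
Context {R : realType} {F : pseudoMetricType R} {V Y : normedModType R}.
Variables (S : F -> Y) (N : F -> V) (d : R).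
Hypotheses (cF : compact [set: F]) (cS : continuous S) (cN : continuous N).
Hypothesis fiber_osc : forall f f', N f = N f' -> `|S f - S f'| <= d.

Lemma fiber_oscillation_uniform (eps : R) : 0 < eps ->
  exists2 del : R, 0 < del &
    forall f f', `|N f - N f'| < del -> `|S f - S f'| < d + eps.
Proof.
move=> eps_gt0.
pose gap (p : F * F) := N p.1 - N p.2.
pose C := [set p : F * F | d + eps <= `|S p.1 - S p.2|].
have C_closed : closed C.
  have -> : C = (fun p => `|S p.1 - S p.2|) @^-1` [set r | d + eps <= r] by [].
  move: (@closed_ge R (d + eps)); apply: (proj1 (continuous_closedP _)) => p.
  apply: cvg_norm; apply: cvgB.
    exact: continuous_comp_fst cS p.
  exact: continuous_comp_snd cS p.
have C_compact : compact C.
  by apply: subclosed_compact C_closed (compact_setX cF cF) _.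
have gap_cont : continuous gap.
  move=> p; apply: cvgB.
    exact: continuous_comp_fst cN p.
  exact: continuous_comp_snd cN p.
have gapC_closed : closed (gap @` C).
  apply: compact_closed (@norm_hausdorff _ V) _.
  exact: continuous_compact (continuous_subspaceT gap_cont) C_compact.
(* 0 lies outside the compact, hence closed, set of gaps of the pairs on
   which S oscillates by at least d + eps. *)
have gapC0 : ~ (gap @` C) 0.
  move=> [[f f'] /= Cff' /eqP]; rewrite subr_eq0 => /eqP/fiber_osc.
  by apply/negP; rewrite -ltNge (lt_le_trans _ Cff') // ltrDl.
have /nbhs_ballP [del del_gt0 delC] : nbhs (0 : V) (~` (gap @` C)).
  by move: gapC_closed; rewrite -openC openE; exact.
exists del => // f f' Nff'; rewrite ltNge; apply/negP => Cff'.
apply: (delC (gap (f, f'))); last by exists (f, f').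
by rewrite -ball_normE /= sub0r normrN.
Qed.

Lemma continuous_factor_approx (eps : R) : 0 < eps ->
  exists2 Psi : V -> Y, continuous Psi & forall f, `|S f - Psi (N f)| <= d + eps.
Proof.
move=> eps_gt0.
have [del del_gt0 Sdel] := fiber_oscillation_uniform _ eps_gt0.
have del2_gt0 : 0 < del / 2 by rewrite divr_gt0.
have [A netA] := compact_finite_net N _ cF cN del2_gt0.
pose w x (y : V) := Num.max 0 (del - `|N x - y|).
pose W y := \sum_(x <- A) w x y.
have w_ge0 x y : 0 <= w x y by rewrite le_max lexx.
have w_cont x : continuous (w x).
  move=> y; apply: (@continuous_max _ _ (fun=> 0) (fun y => del - `|N x - y|)).
    exact: cvg_cst.
  apply: cvgB; first exact: cvg_cst.
  by apply: cvg_norm; apply: cvgB; [exact: cvg_cst | exact: cvg_id].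
have sum_cont (Z : normedModType R) (g : F -> V -> Z) :
    (forall x, continuous (g x)) -> continuous (fun y => \sum_(x <- A) g x y).
  by move=> g_cont; apply: continuous_big => //; exact: add_continuous.
(* The floor del / 2 is never active at codes N f; it keeps the decoder
   continuous where all weights vanish. *)
have inv_cont : continuous (fun y => (Num.max (W y) (del / 2))^-1).
  move=> y; apply: cvgV; first by rewrite gt_eqF // lt_max del2_gt0 orbT.
  apply: (@continuous_max _ _ W (fun=> del / 2)); [exact: sum_cont | exact: cvg_cst].
have G_cont : continuous (fun y => \sum_(x <- A) w x y *: S x).
  by apply: sum_cont => x y; apply: continuousZ; [exact: w_cont | exact: cvg_cst].
exists (fun y => (Num.max (W y) (del / 2))^-1 *: \sum_(x <- A) w x y *: S x).
  by move=> y; apply: cvgZ; [exact: inv_cont | exact: G_cont].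
move=> f; have [x1 Ax1 Nx1f] := netA f.
have W_gt : del / 2 < W (N f).
  rewrite /W (bigD1_seq x1) ?fset_uniq //=; apply: ltr_wpDr; first exact: sumr_ge0.
  by rewrite lt_max; apply/orP; right; lra.
rewrite max_l ?(ltW W_gt) // /W; apply: norm_sub_weighted_avg => // [x|].
  rewrite lt_max ltxx /= subr_gt0 => Nxf; rewrite distrC; exact/ltW/Sdel.
exact: lt_trans del2_gt0 W_gt.
Qed.

End fiber_oscillation.

Local Open Scope ereal_scope.

Section worst_case_error.
Context {R : realType} {F : pseudoMetricType R} {Y : normedModType R}.
Variables (S : F -> Y) (n : nat).

Lemma wc_err_leP (N : F -> 'rV[R]_n) (Phi : 'rV[R]_n -> Y) (e : R) :
  wc_err S N Phi <= e%:E <-> forall f, (`|S f - Phi (N f)| <= e)%R.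
Proof.
split=> [err_le f | err_le].
  by rewrite -lee_fin; apply: le_trans err_le; apply: ereal_sup_ubound; exists f.
by apply: ge_ereal_sup => _ [f _ <-]; rewrite lee_fin.
Qed.

Lemma wc_err_fiber_oscillation (N : F -> 'rV[R]_n) (Phi : 'rV[R]_n -> Y) (e : R) :
  wc_err S N Phi <= e%:E ->
  forall f f', N f = N f' -> (`|S f - S f'| <= e *+ 2)%R.
Proof.
move=> /wc_err_leP err_le f f' Nff'.
have -> : (S f - S f' = (S f - Phi (N f)) - (S f' - Phi (N f')))%R.
  by rewrite Nff' opprB addrA subrK.
by rewrite mulr2n (le_trans (ler_normB _ _)) // lerD.
Qed.

Lemma e_cont_non_ge0 (f0 : F) : 0 <= e_cont_non S n.
Proof.
apply: le_ereal_inf_tmp => _ [N [Phi [_ ->]]].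
apply: le_trans (ereal_sup_ubound _); last by exists f0.
by rewrite lee_fin.
Qed.

Lemma manifold_width_empty : (F -> False) -> manifold_width S n = -oo.
Proof.
move=> F0; apply/eqP; rewrite eq_le leNye andbT; apply: ereal_inf_lbound.
exists (fun=> 0%R), (fun=> 0%R); split; first exact: cst_continuous.
split; first exact: cst_continuous.
rewrite /wc_err (_ : [set _ | f in _] = set0) ?ereal_sup0 //.
by apply/seteqP; split=> // z [f]; case: (F0 f).
Qed.

End worst_case_error.

Theorem mainTheorem4 (R : realType) (F : pseudoMetricType R) (Y : normedModType R)
  (S : F -> Y) :
  hausdorff_space F -> compact [set: F] -> continuous S ->
  forall n : nat, manifold_width S n <= 2%:E * e_cont_non S n.
Proof.
move=> _ cF cS n.
have [[f0 _]|F0] := pselect (exists f : F, True); last first.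
  by rewrite manifold_width_empty ?leNye // => f; apply: F0; exists f.
have := e_cont_non_ge0 S n f0.
case E: (e_cont_non S n) => [r| |] // r_ge0; last by rewrite gt0_muley ?leey.
apply/lee_addgt0Pr => eps eps_gt0.
have eps3_gt0 : (0 < eps / 3)%R by rewrite divr_gt0.
have e_fin : e_cont_non S n \is a fin_num by rewrite E.
have := lb_ereal_inf_adherent eps3_gt0 e_fin; rewrite -/(e_cont_non S n) E -EFinD.
move=> [_ [N [Phi [cN ->]]] /ltW /wc_err_fiber_oscillation fiber_osc].
have [Psi cPsi PsiN] := continuous_factor_approx _ _ _ cF cS cN fiber_osc _ eps3_gt0.
apply: le_trans (ereal_inf_lbound _) _; first by exists N, Psi.
rewrite -EFinM -EFinD; apply/wc_err_leP => f.
by apply: le_trans (PsiN f) _; rewrite mulr2n; lra.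
Qed.
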